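(* Let $R=\bigoplus_{s\in S}R_s$ be an $S$-graded ring inducing $S$ with $S$ cancellative. If $R$ is graded von Neumann regular, then the ring $R_e$ is von Neumann regular for every idempotent $e\in S$.
   Context: Rings are associative, not necessarily unital. $S$-graded ring inducing $S$: $S$ a partial groupoid, $R=\bigoplus_{s\in S}R_s$ with additive subgroups $R_s$, $R_sR_t\subseteq R_{st}$ when $st$ is defined, and $R_sR_t\neq0$ implies $st$ is defined. Convention: $0\in S$, $R_0=0$, $S\setminus\{0\}=\{s:R_s\ne0\}$, undefined products in $S$ set to $0$, $0$ absorbing. Homogeneous elements: $H_R=\bigcup_s R_s$. $S$ is cancellative if $0\ne su=tu$ or $0\ne us=ut$ implies $s=t$. $R$ is graded von Neumann regular if $x\in xRx$ for all $x\in H_R$. For an idempotent $e$ of $S$, $R_e$ is a subring. *)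

From mathcomp Require Import all_boot all_algebra.
Set Implicit Arguments. Unset Strict Implicit. Unset Printing Implicit Defensive.
Import GRing.Theory.
Local Open Scope ring_scope.

(* An associative, not necessarily unital ring: an additive abelian group
   (zmodType) with an associative, biadditive multiplication [mul].
   (We do NOT use MathComp's ring structures, which are unital.) *)
Definition nonunital_ring (R : zmodType) (mul : R -> R -> R) : Prop :=
  [/\ (forall x y z, mul x (mul y z) = mul (mul x y) z),
      (forall x y z, mul x (y + z) = mul x y + mul x z)
    & (forall x y z, mul (x + y) z = mul x z + mul y z)].

(* A partial groupoid S: a set with a partial binary operation
   [op : S -> S -> option S]; [None] means "undefined", i.e. the adjoined
   absorbing element 0 of the paper's convention. *)

Definition additive_subgroup (R : zmodType) (A : R -> Prop) : Prop :=
  A 0 /\ (forall x y, A x -> A y -> A (x - y)).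

(* R = (+)_{s in S} R_s as abelian groups: every element is a finite sum of
   homogeneous elements of pairwise distinct degrees, and such a
   decomposition of 0 is trivial. *)
Definition direct_sum_decomposition (R : zmodType) (S : Type)
    (Rs : S -> R -> Prop) : Prop :=
  (forall s, additive_subgroup (Rs s)) /\
  (forall x : R, exists (n : nat) (g : 'I_n -> S) (f : 'I_n -> R),
      injective g /\ (forall i, Rs (g i) (f i)) /\ x = \sum_(i < n) f i) /\
  (forall (n : nat) (g : 'I_n -> S) (f : 'I_n -> R),
      injective g -> (forall i, Rs (g i) (f i)) ->
      \sum_(i < n) f i = 0 -> forall i, f i = 0).

Definition graded_ring_inducing (R : zmodType) (mul : R -> R -> R)
    (S : Type) (op : S -> S -> option S) (Rs : S -> R -> Prop) : Prop :=
  [/\ nonunital_ring mul,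
      direct_sum_decomposition Rs,
      (forall s t u x y, op s t = Some u -> Rs s x -> Rs t y -> Rs u (mul x y)),
      (forall s t x y, Rs s x -> Rs t y -> mul x y <> 0 -> op s t <> None)
    & (* S \ {0} = { s | R_s <> 0 } : every (nonzero) s in S has R_s <> 0 *)
      (forall s, exists x, Rs s x /\ x <> 0)].

Definition cancellative (S : Type) (op : S -> S -> option S) : Prop :=
  (forall s t u w, op s u = Some w -> op t u = Some w -> s = t) /\
  (forall s t u w, op u s = Some w -> op u t = Some w -> s = t).

Definition graded_vnr (R : zmodType) (mul : R -> R -> R)
    (S : Type) (Rs : S -> R -> Prop) : Prop :=
  forall s x, Rs s x -> exists y : R, x = mul (mul x y) x.

Definition vnr_subring (R : zmodType) (mul : R -> R -> R) (A : R -> Prop) : Prop :=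
  forall x, A x -> exists y, A y /\ x = mul (mul x y) x.

From mathcomp Require Import all_boot all_algebra.
From mathcomp Require Import boolp.
Set Implicit Arguments. Unset Strict Implicit. Unset Printing Implicit Defensive.
Import GRing.Theory.
Local Open Scope ring_scope.

(* Let x ∈ R_e and x = xyx. Splitting y into homogeneous components y_s, the
   term x y_s x lies in R_{ese} (or vanishes), and by cancellativity ese = e forces s = e.
   Comparing the e-components of both sides of x = Σ_s x y_s x therefore
   gives x = x y_e x, with y_e ∈ R_e. *)

Lemma additive_subgroup_sum (V : zmodType) (A : V -> Prop) (I : Type)
    (r : seq I) (P : pred I) (F : I -> V) :
  additive_subgroup A -> (forall i, P i -> A (F i)) -> A (\sum_(i <- r | P i) F i).
Proof.
move=> [A0 AB] AF; apply: (big_ind A) => // x y Ax Ay.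
by have := AB x (0 - y) Ax (AB _ _ A0 Ay); rewrite sub0r opprK.
Qed.

Lemma big_pred1_uniq (V : zmodType) (T : eqType) (r : seq T) (x : T) (F : T -> V) :
  uniq r -> x \in r -> \sum_(s <- r | x == s) F s = F x.
Proof.
move=> r_uniq xr; rewrite -big_filter (eq_filter (a2 := pred1 x)); last first.
  by move=> s; rewrite /= eq_sym.
by rewrite filter_pred1_uniq // big_seq1.
Qed.

Section NonunitalRing.

Variables (R : zmodType) (mul : R -> R -> R).
Hypothesis mulR : nonunital_ring mul.

Lemma mul_0l a : mul 0 a = 0.
Proof.
have [_ _ mulDl] := mulR; apply: (addrI (mul 0 a)).
by rewrite -mulDl !addr0.
Qed.

Lemma mul_0r a : mul a 0 = 0.
Proof.
have [_ mulDr _] := mulR; apply: (addrI (mul a 0)).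
by rewrite -mulDr !addr0.
Qed.

Lemma mul_suml b (I : Type) (r : seq I) (P : pred I) (F : I -> R) :
  mul (\sum_(i <- r | P i) F i) b = \sum_(i <- r | P i) mul (F i) b.
Proof.
have [_ _ mulDl] := mulR.
exact: (big_morph (mul^~ b) (fun x y => mulDl x y b) (mul_0l b)).
Qed.

Lemma mul_sumr a (I : Type) (r : seq I) (P : pred I) (F : I -> R) :
  mul a (\sum_(i <- r | P i) F i) = \sum_(i <- r | P i) mul a (F i).
Proof.
have [_ mulDr _] := mulR.
exact: (big_morph (mul a) (mulDr a) (mul_0r a)).
Qed.

End NonunitalRing.

Section DirectSum.

Variables (R : zmodType) (S : eqType) (Rs : S -> R -> Prop).
Hypothesis RsD : direct_sum_decomposition Rs.

Lemma direct_sum_seq_eq0 (ds : seq S) (F : S -> R) :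
  uniq ds -> (forall s, s \in ds -> Rs s (F s)) -> \sum_(s <- ds) F s = 0 ->
  {in ds, forall s, F s = 0}.
Proof.
move=> ds_uniq RsF sumF0 s sds.
have [_ [_ RsD_eq0]] := RsD.
pose g (j : 'I_(size ds)) := nth s ds j.
have g_inj : injective g.
  by move=> j k /eqP; rewrite nth_uniq // => /eqP /val_inj.
have RsFg j : Rs (g j) (F (g j)) by apply/RsF/mem_nth.
have s_idx : (index s ds < size ds)%N by rewrite index_mem.
have := RsD_eq0 _ g (F \o g) g_inj RsFg _ (Ordinal s_idx).
rewrite /= /g nth_index //; apply.
by rewrite -(big_mkord xpredT (F \o nth s ds)) -(big_nth s xpredT F).
Qed.

Lemma homogeneous_component_sum n (d : 'I_n -> S) (h : 'I_n -> R) e c :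
  (forall i, Rs (d i) (h i)) -> Rs e c -> \sum_i h i = c ->
  \sum_(i | d i == e) h i = c.
Proof.
move=> Rsh Rsc sum_h.
pose ds := undup (e :: [seq d i | i <- enum 'I_n]).
have ds_uniq : uniq ds := undup_uniq _.
have e_ds : e \in ds by rewrite mem_undup mem_head.
have d_ds i : d i \in ds by rewrite mem_undup in_cons map_f ?orbT ?mem_enum.
pose F s := \sum_(i | d i == s) h i - (if e == s then c else 0).
have RsF s : s \in ds -> Rs s (F s).
  move=> _; apply: (RsD.1 s).2.
    by apply: additive_subgroup_sum => [|i /eqP <-]; [exact: RsD.1|exact: Rsh].
  by case: eqP => [<-|_] //; exact: (RsD.1 _).1.
have sumF0 : \sum_(s <- ds) F s = 0.
  rewrite sumrB -big_mkcond big_pred1_uniq // -sum_h.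
  under eq_bigr do rewrite big_mkcond.
  rewrite exchange_big /=.
  under eq_bigr do rewrite -big_mkcond big_pred1_uniq //.
  by rewrite subrr.
have /eqP := direct_sum_seq_eq0 ds_uniq RsF sumF0 e_ds.
by rewrite /F eqxx subr_eq0 => /eqP.
Qed.

End DirectSum.

Section GradedRing.

Variables (R : zmodType) (mul : R -> R -> R) (S : Type).
Variables (op : S -> S -> option S) (Rs : S -> R -> Prop).
Hypotheses (RS : graded_ring_inducing mul op Rs) (S_cancel : cancellative op).

Lemma mul_undefined_eq0 s t x y :
  op s t = None -> Rs s x -> Rs t y -> mul x y = 0.
Proof.
have [_ _ _ mul_defined _] := RS.
move=> st_undef Rsx Rty; apply/eqP/contraT => /eqP xy_neq0.
by case: (mul_defined _ _ _ _ Rsx Rty xy_neq0).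
Qed.

Lemma sandwich_homogeneous e s x z :
  op e e = Some e -> Rs e x -> Rs s z ->
  exists w, Rs w (mul (mul x z) x) /\ (w = e <-> s = e).
Proof.
have [mulR RsD mulRs _ _] := RS; have [cancel_l cancel_r] := S_cancel.
have Rs0 : Rs s 0 := (RsD.1 s).1.
move=> ee Rex Rsz; case es: (op e s) => [u|]; last first.
  by exists s; split; rewrite // (mul_undefined_eq0 es Rex Rsz) mul_0l.
have Rxz : Rs u (mul x z) := mulRs _ _ _ _ _ es Rex Rsz.
case ue: (op u e) => [w|]; last first.
  by exists s; split; rewrite // (mul_undefined_eq0 ue Rxz Rex).
exists w; split; first exact: mulRs _ _ _ _ _ ue Rxz Rex.
split=> [we | se].
- rewrite we in ue; have u_e := cancel_l _ _ _ _ ue ee.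
  by rewrite u_e in es; exact: cancel_r _ _ _ _ es ee.
- by move: es ue; rewrite se ee => -[<-]; rewrite ee => -[->].
Qed.

End GradedRing.

Theorem lemma4p3 (R : zmodType) (mul : R -> R -> R) (S : Type)
    (op : S -> S -> option S) (Rs : S -> R -> Prop) :
  graded_ring_inducing mul op Rs ->
  cancellative op ->
  graded_vnr mul Rs ->
  forall e : S, op e e = Some e -> vnr_subring mul (Rs e).
Proof.
move=> RS S_cancel vnr e ee x Rex.
have [mulR RsD _ _ _] := RS.
have [y xyx] := vnr e x Rex.
have [n [g [f [_ [Rgf y_sum]]]]] := RsD.2.1 y.
have [w Rw] := choice (fun i => sandwich_homogeneous RS S_cancel ee Rex (Rgf i)).
exists (\sum_(i | g i == e :> {classic S}) f i); split.
  by apply: additive_subgroup_sum => [|i /eqP <-]; [exact: (RsD.1 e)|exact: Rgf].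
have x_sum : \sum_i mul (mul x (f i)) x = x.
  by rewrite [RHS]xyx y_sum (mul_sumr mulR) (mul_suml mulR).
rewrite (mul_sumr mulR) (mul_suml mulR).
have e_comp :=
  homogeneous_component_sum (S := {classic S}) RsD (fun i => (Rw i).1) Rex x_sum.
rewrite -[LHS]e_comp; apply: eq_bigl => i.
by apply/eqP/eqP => /(Rw i).2.
Qed.
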